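(* There exist a measurable space $(X,\Sigma)$ and a transition function $p$ on it (with countably additive $p(x,\cdot)$) whose associated operator $A$ on $ba(X,\Sigma)$ has a cycle of measures $K=\{\mu_1,\dots,\mu_m\}$ of period $m\ge 2$ all of whose cyclic measures are purely finitely additive.
   Context: $X$ is an infinite set and $\Sigma$ a $\sigma$-algebra of subsets of $X$ containing all one-point sets. $ba(X,\Sigma)$ denotes the space of bounded finitely additive real-valued measures on $\Sigma$. A nonnegative finitely additive measure $\mu$ is purely finitely additive if every countably additive measure $\lambda$ with $0\le\lambda\le\mu$ is identically zero. A transition function is a map $p(x,E)$ with $0\le p(x,E)\le 1$, $p(x,X)=1$, $p(\cdot,E)$ bounded $\Sigma$-measurable for every $E\in\Sigma$, and $p(x,\cdot)$ countably additive for every $x\in X$. The Markov operator is $A\mu(E)=\int_X p(x,E)\,\mu(dx)$. A cycle of measures of $A$ is a finite numbered set $\{\mu_1,\dots,\mu_m\}$ of pairwise different positive finitely additive measures with $A\mu_i=\mu_{i+1}$ ($1\le i\le m-1$) and $A\mu_m=\mu_1$; $m$ is its period. *)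

From HB Require Import structures.
From mathcomp Require Import all_boot all_order all_algebra.
From mathcomp Require Import all_classical all_reals all_analysis.
Set Implicit Arguments. Unset Strict Implicit. Unset Printing Implicit Defensive.
Import Order.TTheory GRing.Theory Num.Theory numFieldNormedType.Exports.
Local Open Scope classical_set_scope.
Local Open Scope ring_scope.

Section Defs.
Context {d : measure_display} {T : measurableType d} {R : realType}.

Definition fin_additive (mu : set T -> R) : Prop :=
  mu set0 = 0 /\
  forall A B, measurable A -> measurable B -> A `&` B = set0 ->
    mu (A `|` B) = mu A + mu B.

(* positive (nonnegative) finitely additive measure; such a measure is
   automatically bounded by mu setT, hence an element of ba(X,Sigma) *)
Definition pos_fa_measure (mu : set T -> R) : Prop :=
  fin_additive mu /\ forall A, measurable A -> 0 <= mu A.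

Definition countably_additive (mu : set T -> R) : Prop :=
  forall F : nat -> set T, (forall n, measurable (F n)) -> trivIset setT F ->
    (fun n => \sum_(i < n) mu (F i)) @ \oo --> mu (\bigcup_n F n).

Definition purely_fin_additive (mu : set T -> R) : Prop :=
  pos_fa_measure mu /\
  forall lam : set T -> R, fin_additive lam -> countably_additive lam ->
    (forall A, measurable A -> 0 <= lam A <= mu A) ->
    forall A, measurable A -> lam A = 0.

Definition simple_eval (s : seq (R * set T)) (x : T) : R :=
  \sum_(ce <- s) ce.1 * \1_(ce.2) x.

Definition simple_sum (mu : set T -> R) (s : seq (R * set T)) : R :=
  \sum_(ce <- s) ce.1 * mu ce.2.

(* integral of a bounded Sigma-measurable f against a positive finitely
   additive measure mu: supremum of integrals of Sigma-simple minorants *)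
Definition fa_integral (mu : set T -> R) (f : T -> R) : R :=
  sup [set simple_sum mu s | s in
        [set s : seq (R * set T) | (forall ce, ce \in s -> measurable ce.2) /\
                                   forall x, simple_eval s x <= f x]].

Definition transition_function (p : T -> set T -> R) : Prop :=
  (forall x E, measurable E -> 0 <= p x E <= 1) /\
  (forall x, p x setT = 1) /\
  (forall E, measurable E -> measurable_fun setT (fun x => p x E)) /\
  (forall x, fin_additive (p x) /\ countably_additive (p x)).

Definition markov_op (p : T -> set T -> R) (mu : set T -> R) : set T -> R :=
  fun E => fa_integral mu (fun x => p x E).

Definition meq (mu nu : set T -> R) : Prop :=
  forall E, measurable E -> mu E = nu E.

Definition cycle_of_measures (p : T -> set T -> R) (m : nat)
    (mu : nat -> set T -> R) : Prop :=
  (0 < m)%N /\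
  (forall i, (i < m)%N -> pos_fa_measure (mu i)) /\
  (forall i j, (i < j < m)%N -> ~ meq (mu i) (mu j)) /\
  (forall i, (i.+1 < m)%N -> meq (markov_op p (mu i)) (mu i.+1)) /\
  meq (markov_op p (mu m.-1)) (mu 0%N).

End Defs.

From HB Require Import structures.
From mathcomp Require Import all_boot all_order all_algebra.
From mathcomp Require Import all_classical all_reals all_analysis.
From mathcomp Require Import measurable_realfun.
Import Order.TTheory GRing.Theory Num.Theory.
Local Open Scope classical_set_scope.
Local Open Scope ring_scope.

(* A non-principal ultrafilter F on nat yields the {0,1}-valued measure 1_F
   (E has mass 1 iff E belongs to F), which is purely finitely additive since
   it vanishes on points.  Against 1_F, a simple function integrates to its
   value F-almost everywhere, so for the deterministic kernel p(x, .) = δ_(f x)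
   the Markov operator sends 1_F to 1_(f @ F).  For the involution f exchanging
   2k and 2k+1 this gives the 2-cycle {1_F, 1_(f @ F)}; its two measures differ
   because exactly one of them charges the odd numbers. *)

Section ultrafilter.
Context {T : Type}.
Implicit Types (F : set_system T) (A B : set T).

Lemma ultra_setC F A : UltraFilter F -> F (~` A) <-> ~ F A.
Proof.
move=> FU; split=> [FnA FA|nFA]; last by case: (in_ultra_setVsetC A FU).
by apply: (filter_not_empty F); rewrite -(setICr A); apply: filterI.
Qed.

Lemma ultra_setU F A B : UltraFilter F -> F (A `|` B) <-> F A \/ F B.
Proof.
move=> FU; split=> [FAB|[FA|FB]]; last 2 first.
- by apply: filterS FA => x; left.
- by apply: filterS FB => x; right.
apply: contrapT => /not_orP[/(ultra_setC _ _ FU) FnA /(ultra_setC _ _ FU) FnB].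
have : F (~` (A `|` B)) by rewrite setCU; apply: filterI.
by move/(ultra_setC _ _ FU).
Qed.

Lemma ultra_fmap {U : Type} (f : T -> U) F : UltraFilter F -> UltraFilter (f @ F).
Proof.
move=> FU; split=> [|G GF fFG]; first exact: fmap_proper_filter.
apply/seteqP; split=> [A GA|]; last exact: fFG.
apply: contrapT => /(ultra_setC _ _ FU) FnA.
have GnA : G (~` A) by apply: fFG; rewrite /= preimage_setC.
by apply: (filter_not_empty G); rewrite -(setICr A); apply: filterI.
Qed.

Lemma fmap_set1 {U : Type} (f : T -> U) F {FF : ProperFilter F} : injective f ->
  (forall x, ~ F [set x]) -> forall y, ~ (f @ F) [set y].
Proof.
move=> finj nF1 y; rewrite /fmap /= => Fy; have [x /= fxy] := filter_ex Fy.
by apply: (nF1 x); apply: filterS Fy => z /= fzy; apply: finj; rewrite fzy.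
Qed.

Lemma fmap_involutive (f : T -> T) F : involutive f -> f @ (f @ F) = F.
Proof.
move=> fK; have ffA A : f @^-1` (f @^-1` A) = A.
  by apply/seteqP; split=> x /=; rewrite fK.
by rewrite funeqE => A; rewrite /fmap /nbhs /= ffA.
Qed.

End ultrafilter.

Lemma nonprincipal_ultrafilter_nat :
  exists F : set_system nat, UltraFilter F /\ forall n, ~ F [set n].
Proof.
have [F [FU ooF]] := ultraFilterLemma eventually_filter.
exists F; split=> // n Fn.
have Fgt : F [set k | (n < k)%N] by apply: ooF; exists n.+1.
apply: (filter_not_empty F).
suff <- : [set n] `&` [set k | (n < k)%N] = set0 by apply: filterI.
by apply/seteqP; split=> // k [/= -> ]; rewrite ltnn.
Qed.

Section ultra_measure.
Context {d : measure_display} {T : measurableType d} {R : realType}.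
Implicit Types (F : set_system T) (A B : set T).

Definition ultra_measure F : set T -> R := \1_F.

Lemma ultra_measure1 {F A} : F A -> ultra_measure F A = 1.
Proof. by move=> FA; rewrite /ultra_measure indicE mem_set. Qed.

Lemma ultra_measure0 {F A} : ~ F A -> ultra_measure F A = 0.
Proof. by move=> nFA; rewrite /ultra_measure indicE memNset. Qed.

Lemma ultra_measureC_neq F A : UltraFilter F ->
  ultra_measure F (~` A) != ultra_measure F A.
Proof.
move=> FU; have [FA|nFA] := pselect (F A).
  rewrite (ultra_measure1 FA) ultra_measure0; first by rewrite eq_sym oner_eq0.
  by move/(ultra_setC _ _ FU).
by rewrite (ultra_measure0 nFA) ultra_measure1 ?oner_eq0 //; apply/(ultra_setC _ _ FU).
Qed.

Lemma ultra_measure_pos_fa F : UltraFilter F -> pos_fa_measure (ultra_measure F).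
Proof.
move=> FU; split=> [|A _]; last by rewrite /ultra_measure indicE ler0n.
split=> [|A B _ _ AB0]; first by apply: ultra_measure0; apply: filter_not_empty.
have [FA|nFA] := pselect (F A); have [FB|nFB] := pselect (F B).
- by exfalso; apply: (filter_not_empty F); rewrite -AB0; apply: filterI.
- rewrite (ultra_measure0 nFB) (ultra_measure1 FA) ultra_measure1 ?addr0 //.
  by apply/(ultra_setU _ _ _ FU); left.
- rewrite (ultra_measure0 nFA) (ultra_measure1 FB) ultra_measure1 ?add0r //.
  by apply/(ultra_setU _ _ _ FU); right.
- rewrite (ultra_measure0 nFA) (ultra_measure0 nFB) ultra_measure0 ?addr0 //.
  by move/(ultra_setU _ _ _ FU) => [].
Qed.

Lemma near_indic_ultra F A : UltraFilter F ->
  \forall x \near F, \1_A x = ultra_measure F A.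
Proof.
move=> FU; have [FA|nFA] := pselect (F A).
  by rewrite (ultra_measure1 FA); apply: filterS FA => x Ax; rewrite indicE mem_set.
rewrite (ultra_measure0 nFA); apply: filterS ((ultra_setC _ _ FU).2 nFA).
by move=> x nAx; rewrite indicE memNset.
Qed.

Lemma near_simple_eval_ultra F s : UltraFilter F ->
  \forall x \near F, simple_eval s x = simple_sum (ultra_measure F) s.
Proof.
move=> FU; rewrite /simple_eval /simple_sum.
elim: s => [|[c A] s IHs]; first by apply: nearW => x; rewrite !big_nil.
move: (near_indic_ultra _ A FU) IHs; apply: filterS2 => x indicAx sx.
by rewrite !big_cons /= indicAx sx.
Qed.

Lemma fa_integral_ultra_simple F s : UltraFilter F ->
  (forall ce, ce \in s -> measurable ce.2) ->
  fa_integral (ultra_measure F) (simple_eval s) = simple_sum (ultra_measure F) s.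
Proof.
move=> FU ms; rewrite /fa_integral; set S := [set _ | _ in _].
set v := simple_sum (ultra_measure F) s.
have Sv : S v by exists s.
have ubS : ubound S v.
  move=> _ [t [_ le_ts] <-].
  have [x [tx sx]] := filter_ex (filterI (near_simple_eval_ultra _ t FU)
                                         (near_simple_eval_ultra _ s FU)).
  by rewrite -tx /v -sx le_ts.
apply/le_anti/andP; split; first by apply: ge_sup => //; exists v.
by apply: sup_upper_bound => //; split; exists v.
Qed.

Lemma fa_integral_ultra_indic F B : UltraFilter F -> measurable B ->
  fa_integral (ultra_measure F) \1_B = ultra_measure F B.
Proof.
move=> FU mB; have -> : \1_B = simple_eval [:: (1 : R, B)].
  by rewrite funeqE => x; rewrite /simple_eval big_seq1 mul1r.
rewrite fa_integral_ultra_simple ?/simple_sum ?big_seq1 ?mul1r //.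
by move=> ce; rewrite inE => /eqP ->.
Qed.

(* Countability of [T] enters through [g]: [A] is the disjoint union of its
   fibres [A `&` g @^-1` [set i]], each of measure 0 for [ultra_measure F]. *)
Lemma ultra_measure_pure F (g : T -> nat) : UltraFilter F -> injective g ->
  (forall x : T, measurable [set x]) -> (forall x, ~ F [set x]) ->
  purely_fin_additive (ultra_measure F).
Proof.
move=> FU ginj m1 nF1; split=> [|lam _ lam_ca lam_le A mA].
  exact: ultra_measure_pos_fa.
pose P i := A `&` g @^-1` [set i].
have mP i : measurable (P i).
  rewrite /P; have [[x _ gxi]|/preimage10 ->] := pselect (range g i).
    rewrite (_ : g @^-1` _ = [set x]); first exact: measurableI.
    by apply/seteqP; split=> y /=; [rewrite -gxi => /ginj | move=> ->].
  by rewrite setI0.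
have lamP0 i : lam (P i) = 0.
  have /andP[lam_ge0] := lam_le _ (mP i).
  rewrite ultra_measure0 => [lam_le0|FPi]; first exact/le_anti/andP.
  have [x [_ gxi]] := filter_ex FPi; apply: (nF1 x).
  by apply: filterS FPi => y [_ gyi]; apply: ginj; rewrite gyi gxi.
have tP : trivIset setT P by move=> i j _ _ [x [[_ <-] [_ <-]]].
have := lam_ca P mP tP.
have -> : \bigcup_n P n = A.
  by apply/seteqP; split=> [x [n _ []] | x Ax] //; exists (g x).
under eq_fun do rewrite big1 //.
by move/cvg_lim => <- //; rewrite lim_cst.
Qed.

Lemma ultra_measure_fmap_neq F (f : T -> T) A : UltraFilter F ->
  measurable A -> f @^-1` A = ~` A ->
  ~ meq (ultra_measure F) (ultra_measure (f @ F)).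
Proof.
move=> FU mA fA /(_ A mA) /eqP.
have -> : ultra_measure (f @ F) A = ultra_measure F (~` A) by rewrite -fA.
by rewrite eq_sym; apply/negP/ultra_measureC_neq.
Qed.

End ultra_measure.

Section dirac_transition.
Context {d : measure_display} {T : measurableType d} {R : realType}.

Lemma fin_additive_measure (m : {measure set T -> \bar R}) (mu : set T -> R) :
  (forall A, measurable A -> m A = (mu A)%:E) -> fin_additive mu.
Proof.
move=> mE; split=> [|A B mA mB AB0].
  by apply/EFin_inj; rewrite -mE // measure0.
by apply/EFin_inj; rewrite EFinD -!mE ?measureU //; apply: measurableU.
Qed.

Lemma countably_additive_measure (m : {measure set T -> \bar R}) (mu : set T -> R) :
  (forall A, measurable A -> m A = (mu A)%:E) -> countably_additive mu.
Proof.
move=> mE F mF tF; have := @measure_sigma_additive _ _ _ m _ mF tF.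
rewrite mE; last exact: bigcup_measurable.
under eq_fun do rewrite (eq_bigr _ (fun i _ => mE _ (mF i))) sumEFin big_mkord.
exact: fine_cvg.
Qed.

Definition dirac_transition (f : T -> T) : T -> set T -> R := fun x E => \1_E (f x).

Lemma transition_function_dirac f : measurable_fun setT f ->
  transition_function (dirac_transition f).
Proof.
move=> mf; split=> [x E _|].
  by rewrite /dirac_transition indicE; case: (_ \in _); rewrite /= ?ler01 ?lexx.
split=> [x|]; first by rewrite /dirac_transition indicT.
split=> [E mE|x]; first exact: measurableT_comp (measurable_indic mE) mf.
split; [apply: (@fin_additive_measure \d_(f x))
       | apply: (@countably_additive_measure \d_(f x))] => A _; exact: diracE.
Qed.

Lemma markov_op_dirac_ultra f F E : UltraFilter F -> measurable_fun setT f ->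
  measurable E ->
  markov_op (dirac_transition f) (ultra_measure F) E = ultra_measure (f @ F) E.
Proof.
move=> FU mf mE; rewrite /markov_op /dirac_transition.
rewrite (_ : (fun x => _) = \1_(f @^-1` E)) // fa_integral_ultra_indic //.
by rewrite -[X in measurable X]setTI; apply: mf.
Qed.

Lemma cycle_ultra_measure_involution F (f : T -> T) A : UltraFilter F ->
  measurable_fun setT f -> involutive f -> measurable A -> f @^-1` A = ~` A ->
  cycle_of_measures (dirac_transition f) 2
    (fun i => if i == 0%N then ultra_measure F else ultra_measure (f @ F)).
Proof.
move=> FU mf fK mA fA; have fFU := ultra_fmap f _ FU.
split=> //; split; first by case=> [|[|i]] // _; apply: ultra_measure_pos_fa.
split.
  move=> [|i] [|[|j]] //=; rewrite ?andbF // => _.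
  exact: ultra_measure_fmap_neq fA.
split; first by case=> // _ E mE /=; rewrite markov_op_dirac_ultra.
by move=> E mE /=; rewrite markov_op_dirac_ultra // fmap_involutive.
Qed.

End dirac_transition.

Definition pairswap (n : nat) : nat := if odd n then n.-1 else n.+1.

Lemma pairswapK : involutive pairswap.
Proof.
case=> [|n] //; rewrite /pairswap /=.
by case: (boolP (odd n)) => [on|/negPf en] /=; rewrite ?on ?en.
Qed.

Lemma preimage_pairswap_odd :
  pairswap @^-1` [set n | odd n] = ~` [set n | odd n].
Proof.
apply/seteqP; split=> -[|n] //=; rewrite /pairswap /=;
  by case: (boolP (odd n)) => [on|/negPf en] /=; rewrite ?on ?en.
Qed.

Theorem proposition4p1 (R : realType) :
  exists (d : measure_display) (T : measurableType d)
         (p : T -> set T -> R) (m : nat) (mu : nat -> set T -> R),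
    infinite_set [set: T] /\
    (forall x : T, measurable [set x]) /\
    transition_function p /\
    (2 <= m)%N /\
    cycle_of_measures p m mu /\
    (forall i, (i < m)%N -> purely_fin_additive (mu i)).
Proof.
have [F [FU nF1]] := nonprincipal_ultrafilter_nat.
have nG1 : forall n, ~ (pairswap @ F) [set n].
  by apply: fmap_set1 nF1; apply: inv_inj pairswapK.
exists _, nat, (dirac_transition pairswap), 2%N,
  (fun i => if i == 0%N then ultra_measure F else ultra_measure (pairswap @ F)).
split; first exact: infinite_nat.
split; first by [].
split; first exact: transition_function_dirac.
split; first by [].
split; first exact: cycle_ultra_measure_involution FU _ pairswapK _
                      preimage_pairswap_odd.
case=> [|[|i]] //= _; first exact: ultra_measure_pure FU (@inj_id _) _ nF1.
exact: ultra_measure_pure (ultra_fmap _ _ FU) (@inj_id _) _ nG1.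
Qed.
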